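(* Let $\tilde F:\mathbb{R}\to\mathbb{R}$ be continuous in a neighborhood of $x_0\in\mathbb{R}$ and point-Lipschitz at $x_0$. Then the differential equation $\dot x=\tilde F(x)$ with initial condition $x(0)=x_0$ has a unique solution.
   Context: $\tilde F$ is point-Lipschitz at $x_0$ if there exist a neighborhood $\mathcal{U}$ of $x_0$ and $L\ge 0$ such that $|\tilde F(x)-\tilde F(x_0)|\le L|x-x_0|$ for all $x\in\mathcal{U}$. *)

From Stdlib Require Import Reals Lra.
Open Scope R_scope.

Definition point_Lipschitz (F : R -> R) (x0 : R) : Prop :=
  exists delta : R, 0 < delta /\
  exists L : R, 0 <= L /\
  forall x : R, Rabs (x - x0) < delta -> Rabs (F x - F x0) <= L * Rabs (x - x0).

Definition continuous_near (F : R -> R) (x0 : R) : Prop :=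
  exists r : R, 0 < r /\ forall x : R, Rabs (x - x0) < r -> continuity_pt F x.

Definition ivp_solution (F : R -> R) (x0 a b : R) (x : R -> R) : Prop :=
  a < 0 < b /\ x 0 = x0 /\
  forall t : R, a < t < b -> derivable_pt_lim x t (F (x t)).

From Stdlib Require Import Reals Lra Ranalysis5 Classical.
From Coquelicot Require Import Coquelicot.
Open Scope R_scope.

(* If F x0 = 0, the point-Lipschitz bound |F x| <= L |x - x0| confines a solution
   living on a time interval of length < 1/L to every ball around x0, so it is the
   constant x0.  If F x0 > 0, F is positive and bounded near x0 and separation of
   variables applies: with G x = int_{x0}^x ds / F s, a curve near x0 solves the
   problem iff G (x t) = t, so the solution exists (the local inverse of G) and is
   unique (G is injective).  The case F x0 < 0 reduces to this one by reversing time. *)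

Lemma real_induction (P : R -> Prop) (a b : R) :
  (forall s, a <= s <= b -> (forall u, a <= u < s -> P u) -> P s) ->
  (forall s, a <= s < b -> P s -> locally s P) ->
  forall s, a <= s <= b -> P s.
Proof.
  intros Hclosed Hopen s Hs.
  set (E := fun c => a <= c <= b /\ forall u, a <= u < c -> P u).
  destruct (completeness E) as [c [Hub Hlub]].
  { exists b; intros z [Hz _]; lra. }
  { exists a; split; [lra | intros u Hu; lra]. }
  assert (Hac : a <= c) by (apply Hub; split; [lra | intros u Hu; lra]).
  assert (Hcb : c <= b) by (apply Hlub; intros z [Hz _]; lra).
  assert (Hbelow : forall u, a <= u < c -> P u).
  { intros u Hu; destruct (classic (P u)) as [Pu | nPu]; [exact Pu |].
    enough (c <= u) by lra.
    apply Hlub; intros z [_ Hz].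
    destruct (Rle_dec z u); [assumption |].
    exfalso; apply nPu, Hz; lra. }
  assert (Pc : P c) by (apply Hclosed; [lra | exact Hbelow]).
  assert (Hc : c = b).
  { destruct (Req_dec c b) as [|Hcb']; [assumption | exfalso].
    destruct (Hopen c ltac:(lra) Pc) as [e He].
    set (c' := Rmin b (c + e / 2)).
    assert (Hc' : c < c' <= b)
      by (unfold c', Rmin; destruct (Rle_dec b (c + e / 2)); pose proof (cond_pos e); lra).
    enough (c' <= c) by lra.
    apply Hub; split; [lra |].
    intros u Hu.
    destruct (Rtotal_order u c) as [Huc | [-> | Hcu]]; [apply Hbelow; lra | exact Pc |].
    pose proof (Rmin_r b (c + e / 2)) as Hmin; fold c' in Hmin.
    apply He; change (Rabs (u - c) < e); apply Rabs_def1; pose proof (cond_pos e); lra. }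
  destruct (Req_dec s b) as [-> |]; [rewrite <- Hc; exact Pc |].
  apply Hbelow; lra.
Qed.

Lemma zero_derivative_const (h : R -> R) (d : R) :
  (forall t, - d < t < d -> derivable_pt_lim h t 0) ->
  forall t, - d < t < d -> h t = h 0.
Proof.
  intros Hh t Ht.
  assert (Hder : forall u, - d < u < d -> is_derive h u zero)
    by (intros u Hu; apply is_derive_Reals, Hh, Hu).
  destruct (Rtotal_order t 0) as [Ht0 | [-> | Ht0]]; [| reflexivity |].
  - apply eq_is_derive; [intros u Hu; apply Hder; lra | exact Ht0].
  - symmetry; apply eq_is_derive; [intros u Hu; apply Hder; lra | exact Ht0].
Qed.

Lemma derivable_pt_lim_RInt (f : R -> R) (a b x0 : R) :
  (forall x, a < x < b -> continuity_pt f x) -> a < x0 < b ->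
  forall x, a < x < b -> derivable_pt_lim (fun x => RInt f x0 x) x (f x).
Proof.
  intros Hf Hx0 x Hx.
  apply is_derive_Reals, (is_derive_RInt f _ x0);
    [| apply continuity_pt_filterlim, Hf, Hx].
  assert (Hr : 0 < Rmin (x - a) (b - x)) by (apply Rmin_pos; lra).
  exists (mkposreal _ Hr); intros z Hz; change (Rabs (z - x) < Rmin (x - a) (b - x)) in Hz.
  apply (RInt_correct f x0 z), ex_RInt_continuous; intros w Hw.
  apply continuity_pt_filterlim, Hf.
  pose proof (Rmin_l (x - a) (b - x)); pose proof (Rmin_r (x - a) (b - x)).
  apply Rabs_def2 in Hz; revert Hw; unfold Rmin at 1, Rmax;
    destruct (Rle_dec x0 z); lra.
Qed.

Lemma continuous_interval_section (G : R -> R) (a b : R) :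
  a < b -> G a <= G b -> (forall x, a <= x <= b -> continuity_pt G x) ->
  exists g : R -> R,
    (forall y, a <= g y <= b) /\ (forall y, G a <= y <= G b -> G (g y) = y).
Proof.
  intros Hab HGab HG.
  set (clamp y := Rmax (G a) (Rmin y (G b))).
  assert (Hclamp : forall y, G a <= clamp y <= G b).
  { intros y; split; [apply Rmax_l | apply Rmax_lub; [lra | apply Rmin_r]]. }
  exists (fun y => proj1_sig (f_interv_is_interv G a b (clamp y) Hab (Hclamp y) HG)).
  split; intros y; destruct (f_interv_is_interv G a b (clamp y) Hab (Hclamp y) HG)
    as [x [Hx HGx]]; simpl; [exact Hx |].
  intros Hy; rewrite HGx; unfold clamp.
  rewrite Rmin_left, Rmax_right; lra.
Qed.

Lemma increasing_inverse_derivable (G G' : R -> R) (a b : R) :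
  a < b ->
  (forall x y, a <= x -> x < y -> y <= b -> G x < G y) ->
  (forall x, a <= x <= b -> derivable_pt_lim G x (G' x)) ->
  (forall x, a <= x <= b -> G' x <> 0) ->
  exists g : R -> R,
    (forall y, a <= g y <= b) /\ (forall y, G a <= y <= G b -> G (g y) = y) /\
    (forall y, G a < y < G b -> derivable_pt_lim g y (/ G' (g y))).
Proof.
  intros Hab Hincr HG HG'.
  assert (Hcont : forall x, a <= x <= b -> continuity_pt G x)
    by (intros x Hx; apply derivable_continuous_pt; exists (G' x); apply HG, Hx).
  destruct (continuous_interval_section G a b) as [g [Hgab HGg]];
    [exact Hab | apply Rlt_le, Hincr; lra | exact Hcont |].
  exists g; split; [exact Hgab | split; [exact HGg |]].
  intros y Hy.
  assert (Prf : forall z, g (G a) <= z <= g (G b) -> derivable_pt G z).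
  { intros z Hz; exists (G' z); apply HG.
    pose proof (Hgab (G a)); pose proof (Hgab (G b)); lra. }
  assert (Hgcont : continuity_pt g y).
  { apply (continuity_pt_recip_interv G g a b Hab Hincr); auto.
    intros z Hz1 Hz2; unfold comp, id; apply HGg; lra. }
  assert (Hgmono : g (G a) <= g y <= g (G b)).
  { pose proof (f_incr_implies_g_incr_interv G g a b Hab Hincr
      (fun z Hz1 Hz2 => HGg z (conj Hz1 Hz2)) (fun z _ _ => Hgab z)) as Hgincr.
    split; apply Rlt_le, Hgincr; lra. }
  assert (HGgy : derive_pt G (g y) (Prf (g y) Hgmono) = G' (g y))
    by (apply derive_pt_eq_0, HG, Hgab).
  pose proof (derivable_pt_lim_recip_interv G g (G a) (G b) y Prf Hgcont
    ltac:(apply Hincr; lra) Hy Hgmono (fun z Hz => HGg z Hz)) as Hinv.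
  rewrite HGgy in Hinv; rewrite <- Rdiv_1_l; apply Hinv, HG', Hgab.
Qed.

Lemma ivp_solution_reflect (F F' : R -> R) (x0 d : R) (y : R -> R) :
  (forall x, F' x = - F x) ->
  ivp_solution F x0 (- d) d y -> ivp_solution F' x0 (- d) d (fun t => y (- t)).
Proof.
  intros HF' [Hd [Hy0 Hy]].
  split; [lra | split; [rewrite Ropp_0; exact Hy0 |]].
  intros t Ht; rewrite HF'.
  apply derivable_pt_lim_mirr_fwd; rewrite Ropp_involutive.
  apply Hy; lra.
Qed.

Lemma ivp_solution_stays_forward (F : R -> R) (x0 d rho M : R) (y : R -> R) :
  0 <= M -> M * d < rho -> (forall x, Rabs (x - x0) < rho -> Rabs (F x) <= M) ->
  ivp_solution F x0 (- d) d y ->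
  forall t, 0 <= t < d -> Rabs (y t - x0) < rho.
Proof.
  intros HM HMd HF [Hd [Hy0 Hy]] t Ht.
  apply (real_induction (fun u => Rabs (y u - x0) < rho) 0 t); [| | lra].
  - intros s Hs Hbelow.
    destruct (Req_dec s 0) as [-> | Hs0].
    { rewrite Hy0, Rminus_diag, Rabs_R0; nra. }
    destruct (MVT_cor2 y (fun c => F (y c)) 0 s) as [c [Hc Hc0s]]; [lra | |].
    { intros c Hc; apply Hy; lra. }
    rewrite Hy0 in Hc; rewrite Hc, Rabs_mult, Rminus_0_r, (Rabs_pos_eq s) by lra.
    assert (Rabs (F (y c)) <= M) by (apply HF, Hbelow; lra).
    pose proof (Rabs_pos (F (y c))); nra.
  - intros s Hs Ps.
    assert (Hgap : 0 < rho - Rabs (y s - x0)) by lra.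
    assert (Hcont : continuity_pt y s)
      by (apply derivable_continuous_pt; exists (F (y s)); apply Hy; lra).
    apply (filter_imp (fun u => ball (y s) (mkposreal _ Hgap) (y u))).
    + intros u Hu; change (Rabs (y u - y s) < rho - Rabs (y s - x0)) in Hu.
      replace (y u - x0) with ((y u - y s) + (y s - x0)) by ring.
      pose proof (Rabs_triang (y u - y s) (y s - x0)); lra.
    + apply filterlim_locally; apply continuity_pt_filterlim, Hcont.
Qed.

Lemma ivp_solution_stays (F : R -> R) (x0 d rho M : R) (y : R -> R) :
  0 <= M -> M * d < rho -> (forall x, Rabs (x - x0) < rho -> Rabs (F x) <= M) ->
  ivp_solution F x0 (- d) d y ->
  forall t, - d < t < d -> Rabs (y t - x0) < rho.
Proof.
  intros HM HMd HF Hy t Ht.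
  destruct (Rle_dec 0 t).
  - apply (ivp_solution_stays_forward F x0 d rho M); auto; lra.
  - replace t with (- - t) by ring.
    apply (ivp_solution_stays_forward (fun x => - F x) x0 d rho M (fun s => y (- s)) HM HMd);
      [| | lra].
    + intros x Hx; rewrite Rabs_Ropp; auto.
    + apply (ivp_solution_reflect F); auto.
Qed.

Definition has_unique_local_solution (F : R -> R) (x0 : R) : Prop :=
  exists eps : R, 0 < eps /\
  exists x : R -> R, ivp_solution F x0 (- eps) eps x /\
  forall (d : R) (y : R -> R), 0 < d <= eps -> ivp_solution F x0 (- d) d y ->
    forall t : R, - d < t < d -> y t = x t.

Lemma has_unique_local_solution_opp (F : R -> R) (x0 : R) :
  has_unique_local_solution (fun x => - F x) x0 -> has_unique_local_solution F x0.
Proof.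
  intros [eps [Heps [x [Hx Huniq]]]].
  exists eps; split; [exact Heps |].
  exists (fun t => x (- t)); split.
  - apply (ivp_solution_reflect (fun x => - F x)); [intros; ring | exact Hx].
  - intros d y Hd Hy t Ht.
    replace (y t) with (y (- - t)) by (f_equal; ring).
    apply (Huniq d (fun s => y (- s)) Hd); [| lra].
    apply (ivp_solution_reflect F); [reflexivity | exact Hy].
Qed.

Lemma ivp_solution_rest_point (F : R -> R) (x0 delta L d : R) (y : R -> R) :
  0 < delta -> 0 <= L -> L * d < 1 -> F x0 = 0 ->
  (forall x, Rabs (x - x0) < delta -> Rabs (F x - F x0) <= L * Rabs (x - x0)) ->
  ivp_solution F x0 (- d) d y -> forall t, - d < t < d -> y t = x0.
Proof.
  intros Hdelta HL HLd HF0 HLip Hy t Ht.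
  destruct (Req_dec (y t) x0) as [| Hne]; [assumption | exfalso].
  (* on the ball of radius rho := min(delta, |y t - x0|) we have |F| <= L rho, and
     L rho d < rho keeps y inside it, which fails at time t *)
  assert (Hrho : 0 < Rmin delta (Rabs (y t - x0)))
    by (apply Rmin_pos; [lra | apply Rabs_pos_lt; lra]).
  pose proof (Rmin_l delta (Rabs (y t - x0))).
  pose proof (Rmin_r delta (Rabs (y t - x0))).
  set (rho := Rmin delta (Rabs (y t - x0))) in *.
  assert (Hstay : Rabs (y t - x0) < rho).
  { apply (ivp_solution_stays F x0 d rho (L * rho) y); [nra | nra | | exact Hy | exact Ht].
    intros x Hx.
    replace (F x) with (F x - F x0) by (rewrite HF0; ring).
    eapply Rle_trans; [apply HLip; lra | nra]. }
  lra.
Qed.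

Lemma has_unique_local_solution_rest_point (F : R -> R) (x0 : R) :
  point_Lipschitz F x0 -> F x0 = 0 -> has_unique_local_solution F x0.
Proof.
  intros [delta [Hdelta [L [HL HLip]]]] HF0.
  assert (HL1 : 0 < / (L + 1)) by (apply Rinv_0_lt_compat; lra).
  assert (HLeps : L * / (L + 1) < 1).
  { assert (Hinv : (L + 1) * / (L + 1) = 1) by (field; lra); nra. }
  exists (/ (L + 1)); split; [exact HL1 |].
  exists (fun _ => x0); split.
  - split; [lra | split; [reflexivity |]].
    intros t _; rewrite HF0; apply derivable_pt_lim_const.
  - intros d y Hd Hy.
    apply (ivp_solution_rest_point F x0 delta L d); auto; nra.
Qed.

Section PositiveField.

Variables (F : R -> R) (x0 r M : R).
Hypothesis r_pos : 0 < r.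
Hypothesis F_cont : forall x, x0 - r < x < x0 + r -> continuity_pt F x.
Hypothesis F_pos_bounded : forall x, x0 - r < x < x0 + r -> 0 < F x <= M.

Let M_pos : 0 < M.
Proof. pose proof (F_pos_bounded x0); lra. Qed.

Let G (x : R) : R := RInt (fun s => / F s) x0 x.

Let G_derivative (x : R) : x0 - r < x < x0 + r -> derivable_pt_lim G x (/ F x).
Proof.
  apply (derivable_pt_lim_RInt (fun s => / F s) (x0 - r) (x0 + r)); [| lra].
  intros s Hs; apply continuity_pt_inv; [apply F_cont, Hs |].
  pose proof (F_pos_bounded s Hs); lra.
Qed.

Let G_x0 : G x0 = 0.
Proof. exact (RInt_point x0 (fun s => / F s)). Qed.

Let G_increment (a b : R) :
  x0 - r < a -> a < b -> b < x0 + r -> (b - a) / M <= G b - G a.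
Proof.
  intros Ha Hab Hb.
  destruct (MVT_cor2 G (fun s => / F s) a b) as [c [Hc Hcab]]; [exact Hab | |].
  { intros c Hc; apply G_derivative; lra. }
  rewrite Hc; unfold Rdiv; rewrite Rmult_comm.
  apply Rmult_le_compat_r; [lra |].
  apply Rinv_le_contravar; apply F_pos_bounded; lra.
Qed.

Let G_lt (a b : R) : x0 - r < a -> a < b -> b < x0 + r -> G a < G b.
Proof.
  intros Ha Hab Hb; pose proof (G_increment a b Ha Hab Hb).
  assert (0 < (b - a) / M) by (apply Rdiv_lt_0_compat; lra); lra.
Qed.

Let G_inj (a b : R) :
  x0 - r < a < x0 + r -> x0 - r < b < x0 + r -> G a = G b -> a = b.
Proof.
  intros Ha Hb HG; destruct (Rtotal_order a b) as [Hab | [Hab | Hab]]; [| exact Hab |].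
  - pose proof (G_lt a b); lra.
  - pose proof (G_lt b a); lra.
Qed.

Let eps : R := r / (2 * M).

Let ivp_solution_on_level_set (d : R) (y : R -> R) :
  d <= eps -> ivp_solution F x0 (- d) d y ->
  forall t, - d < t < d -> x0 - r < y t < x0 + r /\ G (y t) = t.
Proof.
  intros Hd Hy.
  assert (Hball : forall t, - d < t < d -> x0 - r < y t < x0 + r).
  { intros t Ht.
    enough (Hyt : Rabs (y t - x0) < r) by (apply Rabs_def2 in Hyt; lra).
    apply (ivp_solution_stays F x0 d r M y); [lra | | | exact Hy | exact Ht].
    - assert (M * eps = r / 2) by (unfold eps; field; lra).
      apply Rle_lt_trans with (M * eps); [apply Rmult_le_compat_l | ]; lra.
    - intros x Hx; apply Rabs_def2 in Hx.
      pose proof (F_pos_bounded x ltac:(lra)); rewrite Rabs_pos_eq; lra. }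
  destruct Hy as [Hd0 [Hy0 Hy]].
  assert (Hlevel : forall t, - d < t < d -> derivable_pt_lim (fun s => G (y s) - s) t 0).
  { intros t Ht.
    replace 0 with (/ F (y t) * F (y t) - 1)
      by (pose proof (F_pos_bounded (y t) (Hball t Ht)); field; lra).
    apply derivable_pt_lim_minus; [| apply derivable_pt_lim_id].
    apply (derivable_pt_lim_comp y G); [apply Hy, Ht | apply G_derivative, Hball, Ht]. }
  intros t Ht; split; [exact (Hball t Ht) |].
  pose proof (zero_derivative_const _ d Hlevel t Ht) as Hconst; simpl in Hconst.
  rewrite Hy0, G_x0 in Hconst; lra.
Qed.

Let ivp_solution_exists : exists x : R -> R, ivp_solution F x0 (- eps) eps x.
Proof.
  destruct (increasing_inverse_derivable G (fun s => / F s) (x0 - r / 2) (x0 + r / 2))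
    as [g [Hg [HGg Hg']]].
  - lra.
  - intros a b Ha Hab Hb; apply G_lt; lra.
  - intros x Hx; apply G_derivative; lra.
  - intros x Hx; apply Rinv_neq_0_compat; pose proof (F_pos_bounded x ltac:(lra)); lra.
  - assert (Heps : r / 2 / M = eps) by (unfold eps; field; lra).
    pose proof (G_increment (x0 - r / 2) x0 ltac:(lra) ltac:(lra) ltac:(lra)).
    pose proof (G_increment x0 (x0 + r / 2) ltac:(lra) ltac:(lra) ltac:(lra)).
    replace (x0 - (x0 - r / 2)) with (r / 2) in * by ring.
    replace (x0 + r / 2 - x0) with (r / 2) in * by ring.
    assert (0 < eps) by (unfold eps; apply Rdiv_lt_0_compat; lra).
    exists g; split; [lra | split].
    + pose proof (Hg 0); apply G_inj; [lra | lra |].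
      rewrite HGg, G_x0; lra.
    + intros t Ht; rewrite <- (Rinv_inv (F (g t))); apply Hg'; lra.
Qed.

Lemma positive_field_unique_local_solution : has_unique_local_solution F x0.
Proof.
  destruct ivp_solution_exists as [x Hx].
  exists eps; split; [destruct Hx; lra |].
  exists x; split; [exact Hx |].
  intros d y Hd Hy t Ht.
  destruct (ivp_solution_on_level_set d y ltac:(lra) Hy t Ht) as [Hyt HGy].
  destruct (ivp_solution_on_level_set eps x ltac:(lra) Hx t ltac:(lra)) as [Hxt HGx].
  apply G_inj; [exact Hyt | exact Hxt | lra].
Qed.

End PositiveField.

Lemma continuous_near_pos_bounded (F : R -> R) (x0 : R) :
  continuous_near F x0 -> 0 < F x0 ->
  exists r, 0 < r /\ (forall x, x0 - r < x < x0 + r -> continuity_pt F x) /\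
    (forall x, x0 - r < x < x0 + r -> 0 < F x <= 2 * F x0).
Proof.
  intros [r0 [Hr0 Hcont]] HF0.
  assert (Hc0 : continuity_pt F x0)
    by (apply Hcont; rewrite Rminus_diag, Rabs_R0; exact Hr0).
  destruct (proj1 (filterlim_locally F (F x0)) (proj1 (continuity_pt_filterlim F x0) Hc0)
    (mkposreal _ HF0)) as [delta Hdelta].
  pose proof (Rmin_l r0 delta); pose proof (Rmin_r r0 delta).
  exists (Rmin r0 delta); split; [apply Rmin_pos; [exact Hr0 | apply cond_pos] | split].
  - intros x Hx; apply Hcont, Rabs_def1; lra.
  - intros x Hx.
    assert (HFx : Rabs (F x - F x0) < F x0)
      by (apply Hdelta; change (Rabs (x - x0) < delta); apply Rabs_def1; lra).
    apply Rabs_def2 in HFx; lra.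
Qed.

Lemma has_unique_local_solution_pos (F : R -> R) (x0 : R) :
  continuous_near F x0 -> 0 < F x0 -> has_unique_local_solution F x0.
Proof.
  intros Hcont HF0.
  destruct (continuous_near_pos_bounded F x0 Hcont HF0) as [r [Hr [HFc HFb]]].
  exact (positive_field_unique_local_solution F x0 r (2 * F x0) Hr HFc HFb).
Qed.

Theorem corollary4p4 (F : R -> R) (x0 : R) :
  continuous_near F x0 -> point_Lipschitz F x0 ->
  exists eps : R, 0 < eps /\
  exists x : R -> R, ivp_solution F x0 (- eps) eps x /\
  forall (d : R) (y : R -> R), 0 < d <= eps -> ivp_solution F x0 (- d) d y ->
    forall t : R, - d < t < d -> y t = x t.
Proof.
  intros Hcont Hlip.
  destruct (Rtotal_order (F x0) 0) as [Hneg | [Hzero | Hpos]].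
  - apply has_unique_local_solution_opp, has_unique_local_solution_pos; [| lra].
    destruct Hcont as [r [Hr Hc]].
    exists r; split; [exact Hr | intros x Hx; apply continuity_pt_opp, Hc, Hx].
  - exact (has_unique_local_solution_rest_point F x0 Hlip Hzero).
  - exact (has_unique_local_solution_pos F x0 Hcont Hpos).
Qed.
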